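(* Let $G$ be a finite group of order $n$, let $\alpha,\beta:G\to\mathbb{Q}$ be class functions with $\alpha(g)=\alpha(g^{-1})$ and $\beta(g)=\beta(g^{-1})$ for all $g\in G$, and let $K$ be a field with $\mathbb{Q}\subseteq K\subseteq\mathbb{Q}(\zeta_n)$. Let $H_K=\eta(\operatorname{Gal}(\mathbb{Q}(\zeta_n)/K))$, $H_\alpha(K)=\{h\in H_K\mid \alpha^h=\alpha\}$ and $H_\beta(K)=\{h\in H_K\mid \beta^h=\beta\}$. If $H_\alpha(K)=H_\beta(K)$, then all eigenvalues of $\operatorname{Cay}(G,\alpha)$ lie in $K$ if and only if all eigenvalues of $\operatorname{Cay}(G,\beta)$ lie in $K$.
   Context: $\zeta_n=e^{2\pi i/n}$; $\eta:\operatorname{Gal}(\mathbb{Q}(\zeta_n)/\mathbb{Q})\to\mathbb{Z}_n^*$ is the isomorphism with $\sigma(\zeta_n)=\zeta_n^{\eta(\sigma)}$. For $h\in\mathbb{Z}_n^*$, $\alpha^h(g)=\alpha(g^h)$. The Cayley colour graph $\operatorname{Cay}(G,f)$ has vertex set $G$ and adjacency matrix $[f(gh^{-1})]_{g,h\in G}$; its eigenvalues are those of this matrix. *)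

From HB Require Import structures.
From mathcomp Require Import all_boot all_order all_algebra all_fingroup all_field.
Set Implicit Arguments. Unset Strict Implicit. Unset Printing Implicit Defensive.
Import GRing.Theory Num.Theory.
Local Open Scope ring_scope.

Definition sym_class_fun (gT : finGroupType) (a : gT -> rat) : Prop :=
  (forall x y : gT, a (x ^ y)%g = a x) /\ (forall x : gT, a (x^-1)%g = a x).

Definition in_Qz (z x : algC) : Prop :=
  exists p : {poly rat}, x = (map_poly ratr p).[z].

(* K is a subfield of algC with Q <= K <= Q(z) (Q <= K is automatic) *)
Definition intermediate_field (z : algC) (K : {pred algC}) : Prop :=
  GRing.divring_closed K /\ (forall x, x \in K -> in_Qz z x).

(* k (mod n) lies in H_K = eta(Gal(Q(z)/K)): k is a unit mod n and the
   automorphism z |-> z^k of Q(z) fixes K; automorphisms of Q(z) are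
   represented by (extensions to) ring endomorphisms of algC. *)
Definition in_HK (n : nat) (z : algC) (K : {pred algC}) (k : nat) : Prop :=
  coprime k n /\
  exists s : {rmorphism algC -> algC},
    s z = z ^+ k /\ (forall x, x \in K -> s x = x).

(* alpha^k = alpha, where alpha^k(g) = alpha(g^k) *)
Definition pow_fixed (gT : finGroupType) (a : gT -> rat) (k : nat) : Prop :=
  forall g : gT, a (g ^+ k)%g = a g.

Definition cay_mx (gT : finGroupType) (a : gT -> rat) : 'M[algC]_#|gT| :=
  \matrix_(i, j) ratr (a (enum_val i * (enum_val j)^-1)%g).

Definition all_eigs_in (gT : finGroupType) (a : gT -> rat) (K : {pred algC}) : Prop :=
  forall l : algC, eigenvalue (cay_mx a) l -> l \in K.

(* For a class function f on G, the group matrix [f(g h^-1)] multiplies the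
   group matrix of each irreducible character chi_i by the scalar
   omega_i(f) = (sum_h f(h) chi_i(h^-1)) / chi_i(1)  ([central_char f i]),
   by the generalised orthogonality relations; the chi_i(1)-weighted sum of
   these group matrices is |G| times the identity, so the eigenvalues of
   Cay(G, f) are exactly the omega_i(f).  For rational f, the automorphism
   z |-> z^k of Q(z) maps chi_i(x) to chi_i(x^k), hence omega_i(f) to
   omega_i(f^k') where k k' = 1 mod |G|; since the omega_i determine f, they
   are all fixed by Gal(Q(z)/K) iff f^k = f for every k in H_K.  The elements
   of Q(z) fixed by Gal(Q(z)/K) are those of K (shown with the minimal
   polynomial of z over K), so the eigenvalues of Cay(G, f) lie in K iff
   H_f(K) = H_K, a condition shared by alpha and beta when
   H_alpha(K) = H_beta(K). *)

From HB Require Import structures.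
From mathcomp Require Import all_boot all_order all_algebra all_fingroup all_field.
From mathcomp Require Import all_solvable all_character.
From mathcomp Require Import ring.
From Stdlib Require Import Classical.
Set Implicit Arguments. Unset Strict Implicit. Unset Printing Implicit Defensive.
Import GRing.Theory Num.Theory.
Local Open Scope ring_scope.

Definition class_fun (gT : finGroupType) (R : Type) (f : gT -> R) : Prop :=
  forall x y : gT, f (x ^ y)%g = f x.

Section GroupMatrix.
Variable gT : finGroupType.
Implicit Types f g : gT -> algC.

Definition group_mx f : 'M[algC]_#|gT| :=
  \matrix_(i, j) f (enum_val i * (enum_val j)^-1)%g.

Definition gconv f g x := \sum_h f h * g (h^-1 * x)%g.

Lemma eq_group_mx f g : f =1 g -> group_mx f = group_mx g.
Proof. by move=> fg; apply/matrixP=> i j; rewrite !mxE fg. Qed.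

Lemma group_mxM f g : group_mx f *m group_mx g = group_mx (gconv f g).
Proof.
apply/matrixP=> i j; rewrite !mxE.
under eq_bigr do rewrite !mxE.
rewrite -(big_enum_val
  (fun y => f (enum_val i * y^-1)%g * g (y * (enum_val j)^-1)%g)).
rewrite (reindex_inj (inj_comp (mulIg (enum_val i)) (@invg_inj gT))).
apply: eq_bigr => h _ /=.
by rewrite invMg invgK mulgA mulgV mul1g mulgA.
Qed.

Lemma group_mx1 : group_mx (fun x => (x == 1%g)%:R) = 1%:M.
Proof.
apply/matrixP=> i j; rewrite !mxE; congr (_%:R).
by rewrite -(inj_eq (mulIg (enum_val j))) mulgKV mul1g (inj_eq enum_val_inj).
Qed.

Lemma group_mx_sum I (r : seq I) (F : I -> gT -> algC) :
  group_mx (fun x => \sum_(i <- r) F i x) = \sum_(i <- r) group_mx (F i).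
Proof.
by apply/matrixP=> i j; rewrite !mxE summxE; apply: eq_bigr => k _; rewrite mxE.
Qed.

Lemma group_mxZ c f : group_mx (fun x => c * f x) = c *: group_mx f.
Proof. by apply/matrixP=> i j; rewrite !mxE. Qed.

Lemma gconvC f g : class_fun g -> gconv f g =1 gconv g f.
Proof.
move=> gJ x; rewrite /gconv.
rewrite [RHS](reindex_inj (inj_comp (mulgI x) (@invg_inj gT))).
apply: eq_bigr => u _ /=; rewrite invMg invgK mulgKV mulrC; congr (_ * _).
by rewrite -[RHS](gJ _ u) conjgE !mulgA -(mulgA _ u^-1%g) mulVg mulg1.
Qed.

End GroupMatrix.

Section CentralCharacter.
Variable gT : finGroupType.
Local Notation G := [set: gT].
Implicit Types (f g : gT -> algC) (i : Iirr G).

Definition central_char f i := (\sum_h f h * 'chi_i (h^-1)%g) / 'chi_i 1%g.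

Lemma exists_cfun f : class_fun f -> exists phi : 'CF(G), forall x, phi x = f x.
Proof.
move=> fJ; have fG : is_class_fun <<G>>%g (finfun f).
  by rewrite genGid; apply: intro_class_fun => [x y _ _|x]; rewrite ?fJ // inE.
by exists (Cfun 0 fG) => x; rewrite cfunE.
Qed.

Lemma sum_setT (F : gT -> algC) : \sum_(x in G) F x = \sum_x F x.
Proof. by apply: eq_bigl => x; rewrite inE. Qed.

Lemma central_char_cfdot (phi : 'CF(G)) i :
  central_char phi i = #|G|%:R * '[phi, 'chi_i] / 'chi_i 1%g.
Proof.
rewrite /central_char cfdotE sum_setT mulrA mulfV ?neq0CG // mul1r.
by congr (_ / _); apply: eq_bigr => h _; rewrite irr_inv.
Qed.

Lemma eq_central_char f g i : f =1 g -> central_char f i = central_char g i.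
Proof. by move=> fg; congr (_ / _); apply: eq_bigr => h _; rewrite fg. Qed.

Lemma central_char_inj f g : class_fun f -> class_fun g ->
  (forall i, central_char f i = central_char g i) -> f =1 g.
Proof.
move=> /exists_cfun[phi phiE] /exists_cfun[psi psiE] fg x.
suff phi_psi : phi = psi by rewrite -phiE -psiE phi_psi.
rewrite [phi]cfun_sum_cfdot [psi]cfun_sum_cfdot; apply: eq_bigr => i _.
have := fg i; rewrite -(eq_central_char _ phiE) -(eq_central_char _ psiE).
rewrite !central_char_cfdot => /(mulIf (invr_neq0 (irr1_neq0 i))).
by move/(mulfI (neq0CG G)) ->.
Qed.

Lemma gconv_irr_irr i j x :
  gconv 'chi_j 'chi_i x = (i == j)%:R * (#|G|%:R * ('chi_i x / 'chi_i 1%g)).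
Proof.
have := generalized_orthogonality_relation x i j.
rewrite sum_setT (reindex_inj (@invg_inj gT)) /= => /(congr1 ( *%R #|G|%:R)).
rewrite mulVKf ?neq0CG // mulrCA => <-.
by apply: eq_bigr => h _; rewrite invgK mulrC.
Qed.

Lemma gconv_irr f i x : class_fun f ->
  gconv f 'chi_i x = central_char f i * 'chi_i x.
Proof.
move=> /exists_cfun[phi phiE].
have -> : gconv f 'chi_i x = \sum_j '[phi, 'chi_j] * gconv 'chi_j 'chi_i x.
  under [RHS]eq_bigr do rewrite mulr_sumr.
  rewrite exchange_big; apply: eq_bigr => h _ /=.
  rewrite -phiE {1}[phi]cfun_sum_cfdot sum_cfunE mulr_suml.
  by apply: eq_bigr => j _; rewrite cfunE mulrA.
under eq_bigr do rewrite gconv_irr_irr.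
rewrite (bigD1 i) //= big1 => [|j ji]; last first.
  by rewrite eq_sym (negbTE ji) mul0r mulr0.
rewrite eqxx mul1r addr0 -(eq_central_char _ phiE) central_char_cfdot.
by ring.
Qed.

Lemma group_mx_irr f i : class_fun f ->
  group_mx f *m group_mx 'chi_i = central_char f i *: group_mx 'chi_i.
Proof.
move=> fJ; rewrite group_mxM -group_mxZ.
by apply: eq_group_mx => x; apply: gconv_irr.
Qed.

Lemma irr_group_mx f i : class_fun f ->
  group_mx 'chi_i *m group_mx f = central_char f i *: group_mx 'chi_i.
Proof.
move=> fJ; rewrite group_mxM -group_mxZ; apply: eq_group_mx => x.
by rewrite gconvC // gconv_irr.
Qed.

Lemma sum_group_mx_irr :
  \sum_i 'chi_i 1%g *: group_mx 'chi[G]_i = #|G|%:R *: 1%:M.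
Proof.
rewrite -(eq_bigr _ (fun i _ => group_mxZ _ _)) -group_mx_sum.
rewrite -group_mx1 -group_mxZ.
apply: eq_group_mx => x; rewrite mulr_natr -(@cfRegE _ [set: gT]%G) cfReg_sum.
by rewrite sum_cfunE; apply: eq_bigr => i _; rewrite cfunE.
Qed.

Lemma eigenvalue_group_mx f l : class_fun f ->
  eigenvalue (group_mx f) l <-> exists i, l = central_char f i.
Proof.
move=> fJ; split.
  case/eigenvalueP=> v vf v_neq0.
  (* v cannot kill every group_mx 'chi_i, as they span a nonzero scalar matrix. *)
  have [i vi_neq0 | vi0] := pickP (fun i => v *m group_mx 'chi[G]_i != 0).
    exists i; apply/eqP; rewrite -subr_eq0.
    have : (l - central_char f i) *: (v *m group_mx 'chi_i) == 0.
      by rewrite scalerBl scalemxAl -vf -mulmxA group_mx_irr // -scalemxAr subrr.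
    by rewrite scaler_eq0 (negbTE vi_neq0) orbF.
  case/negP: v_neq0; have : v *m (#|G|%:R *: 1%:M) = 0.
    rewrite -sum_group_mx_irr mulmx_sumr big1 // => i _.
    by rewrite -scalemxAr (eqP (negbFE (vi0 i))) scaler0.
  by rewrite -scalemxAr mulmx1 => /eqP; rewrite scaler_eq0 (negbTE (neq0CG G)).
case=> i ->; apply/eigenvalueP.
exists (row (enum_rank 1%g) (group_mx 'chi_i)).
  by rewrite -row_mul irr_group_mx //; apply/rowP=> j; rewrite !mxE.
apply/negP=> /eqP/rowP/(_ (enum_rank 1%g)); rewrite !mxE enum_rankK mulgV.
exact/eqP/irr1_neq0.
Qed.

End CentralCharacter.

Section InQz.
Variable z : algC.

Lemma in_Qz_rat c : in_Qz z (ratr c).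
Proof. by exists c%:P; rewrite map_polyC hornerC. Qed.

Lemma in_Qz_exp m : in_Qz z (z ^+ m).
Proof. by exists 'X^m; rewrite map_polyXn hornerXn. Qed.

Lemma in_QzD x y : in_Qz z x -> in_Qz z y -> in_Qz z (x + y).
Proof. by move=> [p ->] [q ->]; exists (p + q); rewrite rmorphD hornerD. Qed.

Lemma in_QzM x y : in_Qz z x -> in_Qz z y -> in_Qz z (x * y).
Proof. by move=> [p ->] [q ->]; exists (p * q); rewrite rmorphM hornerM. Qed.

Lemma in_Qz_sum I (r : seq I) (F : I -> algC) :
  (forall i, in_Qz z (F i)) -> in_Qz z (\sum_(i <- r) F i).
Proof.
move=> QF; elim: r => [|i r IHr]; last by rewrite big_cons; apply: in_QzD.
by rewrite big_nil -(rmorph0 ratr); apply: in_Qz_rat.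
Qed.

End InQz.

Section IrrValues.
Variables (gT : finGroupType) (z : algC).
Hypothesis pz : #|gT|.-primitive_root z.
Variables (i : Iirr [set: gT]) (x : gT).

Lemma irr_expg_sum_roots :
  exists ms : seq nat, forall k, 'chi_i (x ^+ k)%g = \sum_(m <- ms) z ^+ (m * k).
Proof.
have Gx : x \in [set: gT] by rewrite inE.
have [e [[B uB rGx] [e1 _] [chix _] _]] := repr_rsim_diag 'Chi_i Gx.
have /fin_all_exists[m em] j : exists m, e 0 j = z ^+ m.
  suff /(prim_rootP pz)[m ->] : e 0 j ^+ #|gT| = 1 by exists m.
  have /dvdnP[c ->] : (#[x]%g %| #|gT|)%N by rewrite -cardsT order_dvdG.
  by rewrite mulnC exprM e1 expr1n.
have rGxk k : 'Chi_i (x ^+ k)%g = invmx B *m diag_mx (\row_j e 0 j ^+ k) *m B.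
  elim: k => [|k IHk].
    suff -> : diag_mx (\row_j e 0 j ^+ 0) = 1%:M.
      by rewrite mulmx1 mulVmx ?repr_mx1.
    by apply/matrixP=> a b; rewrite !mxE; case: (a == b).
  rewrite expgS repr_mxM ?groupX // IHk rGx !mulmxA (mulmxK uB).
  rewrite -(mulmxA _ (diag_mx e)) mulmx_diag; congr (_ *m _ *m _); congr diag_mx.
  by apply/rowP=> j; rewrite !mxE exprS.
exists [seq m j | j <- enum 'I_(irr_degree (socle_of_Iirr i))] => k.
rewrite big_map big_enum /= -irrRepr cfunE groupX // rGxk mulr1n mxtrace_mulC.
rewrite mulmxA mulmxV // mul1mx mxtrace_diag.
by apply: eq_bigr => j _; rewrite mxE em -exprM mulnC.
Qed.

Lemma irr_in_Qz : in_Qz z ('chi_i x).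
Proof.
have [ms chiE] := irr_expg_sum_roots; rewrite -[x]expg1 chiE.
by apply: in_Qz_sum => m; apply: in_Qz_exp.
Qed.

Lemma irr_aut (s : {rmorphism algC -> algC}) k :
  s z = z ^+ k -> s ('chi_i x) = 'chi_i (x ^+ k)%g.
Proof.
move=> sz; have [ms chiE] := irr_expg_sum_roots.
rewrite -[x in LHS]expg1 !chiE rmorph_sum; apply: eq_bigr => m _.
by rewrite rmorphXn sz -exprM muln1 mulnC.
Qed.

End IrrValues.

Section CentralCharAut.
Variables (gT : finGroupType) (k : nat).
Hypothesis coprime_k : coprime k #|gT|.
Local Notation k' := (expg_invn [set: gT] k).

Lemma expgK_coprime : cancel (natexp^~ k) (natexp^~ k' : gT -> gT).
Proof. by move=> x; apply: expgK; rewrite ?cardsT 1?coprime_sym ?inE. Qed.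

Lemma expgKV_coprime : cancel (natexp^~ k') (natexp^~ k : gT -> gT).
Proof. by move=> x; rewrite /= expgAC expgK_coprime. Qed.

Lemma central_char_aut z (s : {rmorphism algC -> algC}) (a : gT -> rat) i :
  #|gT|.-primitive_root z -> s z = z ^+ k ->
  s (central_char (fun h => ratr (a h)) i)
    = central_char (fun h => ratr (a (h ^+ k')%g)) i.
Proof.
move=> pz sz; rewrite /central_char fmorph_div rmorph_sum (irr_aut pz _ _ sz).
rewrite expg1n (reindex_inj (can_inj expgKV_coprime)); congr (_ / _).
apply: eq_bigr => h _ /=.
by rewrite rmorphM fmorph_rat (irr_aut pz _ _ sz) -expVgn expgKV_coprime.
Qed.

End CentralCharAut.

Lemma size_sub_lead (R : nzRingType) (p q : {poly R}) : p != 0 ->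
  size q = size p -> lead_coef q = lead_coef p -> (size (p - q)%R < size p)%N.
Proof.
rewrite -size_poly_eq0; case sp: (size p) => [|m] // _ sq lq.
apply/leq_sizeP => j; rewrite leq_eqVlt => /orP[/eqP <-|lt_mj].
  have lcE (r : {poly R}) : size r = m.+1 -> r`_m = lead_coef r.
    by rewrite lead_coefE => ->.
  by rewrite coefB !lcE ?lq ?subrr.
by rewrite coefB !nth_default ?subr0 ?sp ?sq.
Qed.

Lemma poly_const_on_roots (R : idomainType) (r : {poly R}) (rs : seq R) x :
  uniq rs -> (0 < size rs)%N -> (size r <= size rs)%N ->
  {in rs, forall w, r.[w] = x} -> r = x%:P.
Proof.
move=> urs rs_gt0 sr rx; apply/eqP; rewrite -subr_eq0; apply/eqP.
apply: (roots_geq_poly_eq0 _ urs).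
  by apply/allP=> w /rx rw; rewrite /root hornerD hornerN hornerC rw subrr.
rewrite (leq_trans (size_polyD _ _)) // size_polyN geq_max sr.
exact: leq_trans (size_polyC_leq1 _) rs_gt0.
Qed.

Lemma rmorph_horner_rat (s : {rmorphism algC -> algC}) (r : {poly rat}) w :
  s (map_poly ratr r).[w] = (map_poly ratr r).[s w].
Proof.
rewrite -horner_map -map_poly_comp; congr (_.[_]).
by apply: eq_map_poly => c /=; rewrite fmorph_rat.
Qed.

Lemma dvdp_cyclotomic (R : idomainType) (z : R) n (p : {poly R}) :
  p \is monic -> p %| cyclotomic z n ->
  exists ks : seq 'I_n, [/\ uniq ks, all (fun k : 'I_n => coprime k n) ks &
    p = \prod_(k <- ks) ('X - (z ^+ k)%:P)].
Proof.
move=> mp; rewrite /cyclotomic -big_filter => /dvdp_prod_XsubC[msk].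
rewrite eqp_monic ?monic_prod_XsubC // => /eqP pE; eexists; split; last exact: pE.
  by rewrite mask_uniq // filter_uniq // index_enum_uniq.
by apply/allP=> k /mem_mask; rewrite mem_filter => /andP[].
Qed.

Section FixedField.
Variable K : {pred algC}.
Hypothesis K_divring : GRing.divring_closed K.
HB.instance Definition _ := GRing.isDivringClosed.Build algC K K_divring.

Lemma modp_polyOver (p f : {poly algC}) : p \is monic -> p \is a polyOver K ->
  f \is a polyOver K -> f %% p \is a polyOver K.
Proof.
move=> mp Kp; elim: {f}(size f) {-2}f (leqnn (size f)) => [|m IHm] f sf Kf.
  by move: sf; rewrite leqn0 size_poly_eq0 => /eqP->; rewrite mod0p polyOver0.
have [lt_fp | le_pf] := ltnP (size f) (size p); first by rewrite modp_small.
have f_neq0 : f != 0.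
  by rewrite -size_poly_gt0 (leq_trans _ le_pf) // size_poly_gt0 monic_neq0.
have lf_neq0 : lead_coef f != 0 by rewrite lead_coef_eq0.
set P := lead_coef f *: 'X^(size f - size p) * p.
have sP : size P = size f.
  rewrite /P size_Mmonic // ?size_scale ?size_polyXn ?addSn ?subnK //.
  by rewrite scaler_eq0 (negbTE lf_neq0) -size_poly_eq0 size_polyXn.
have lP : lead_coef P = lead_coef f.
  by rewrite /P lead_coef_Mmonic // lead_coefZ lead_coefXn mulr1.
rewrite -(subrK P f) modpD modp_mull addr0; apply: IHm.
  by rewrite -ltnS (leq_trans (size_sub_lead f_neq0 sP lP)).
by rewrite rpredB // rpredM // polyOverZ ?polyOverXn //; apply/polyOverP.
Qed.

Lemma map_ratr_polyOver (r : {poly rat}) : map_poly ratr r \is a polyOver K.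
Proof. by apply/polyOverP => j; rewrite coef_map rpred_rat. Qed.

Lemma minpoly_exists z q : q \is monic -> q \is a polyOver K -> root q z ->
  exists p, [/\ p \is monic, p \is a polyOver K, root p z &
    forall f, f \is a polyOver K -> root f z -> p %| f].
Proof.
elim: {q}(size q) {-2}q (leqnn (size q)) => [|m IHm] q sq mq Kq qz.
  by move: sq; rewrite leqn0 size_poly_eq0 (negbTE (monic_neq0 mq)).
have [[f [Kf fz sf f_neq0]] | no_smaller] := classic
    (exists f, [/\ f \is a polyOver K, root f z, (size f < size q)%N & f != 0]).
  have lf_neq0 : lead_coef f != 0 by rewrite lead_coef_eq0.
  apply: (IHm ((lead_coef f)^-1 *: f)).
  - by rewrite size_scale ?invr_eq0 // -ltnS (leq_trans sf).
  - by rewrite monicE lead_coefZ mulVf.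
  - by rewrite polyOverZ // rpredV; apply/polyOverP.
  - by rewrite rootZ ?invr_eq0.
exists q; split => // f Kf fz; apply/modp_eq0P/eqP/negP => r_neq0.
apply: no_smaller; exists (f %% q); split => //.
- exact: modp_polyOver.
- by rewrite /root horner_mod.
- by rewrite ltn_modpN0 // monic_neq0.
- exact/negP.
Qed.

Variables (n : nat) (z : algC).
Hypothesis pz : n.-primitive_root z.
Hypothesis K_Qz : forall x, x \in K -> in_Qz z x.

Lemma cyclotomic_polyOver : cyclotomic z n \is a polyOver K.
Proof.
rewrite -(Cintr_Cyclotomic pz).
by apply/polyOverP => j; rewrite coef_map rpred_int.
Qed.

Lemma in_HK_minpoly_root (p : {poly algC}) k :
  (forall f, f \is a polyOver K -> root f z -> p %| f) ->
  root p (z ^+ k) -> coprime k n -> in_HK n z K k.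
Proof.
move=> p_min pzk ck; have [u uE] := Qn_aut_exists ck.
split=> //; exists u; split=> [|y Ky]; first by rewrite uE // prim_expr_order.
have [r yE] := K_Qz Ky.
(* r - y vanishes at z, hence at its conjugate z^k. *)
have : root (map_poly ratr r - y%:P) (z ^+ k).
  apply: root_dvdp pzk; apply: p_min.
    by rewrite rpredB ?polyOverC ?map_ratr_polyOver.
  by rewrite /root hornerD hornerN hornerC -yE subrr.
rewrite /root hornerD hornerN hornerC subr_eq0 => /eqP ryE.
by rewrite [in LHS]yE rmorph_horner_rat uE // prim_expr_order.
Qed.

Lemma fixed_in_K x : in_Qz z x ->
  (forall k, (k < n)%N -> coprime k n -> forall s : {rmorphism algC -> algC},
     s z = z ^+ k -> (forall y, y \in K -> s y = y) -> s x = x) ->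
  x \in K.
Proof.
(* x = r(z) with size r < size p, and r takes the value x at all the roots
   z^k of p, which are too many for r - x to be nonzero. *)
move=> [r0 xE] x_fixed.
have Phi_z : root (cyclotomic z n) z by rewrite (root_cyclotomic pz).
have [p [mp Kp p_z p_min]] :=
  minpoly_exists (cyclotomic_monic z n) cyclotomic_polyOver Phi_z.
have [ks [uks cks pE]] := dvdp_cyclotomic mp (p_min _ cyclotomic_polyOver Phi_z).
set rs := [seq z ^+ val k | k <- ks].
have {}pE : p = \prod_(w <- rs) ('X - w%:P) by rewrite pE big_map.
set r := map_poly ratr r0 %% p.
have rx : {in rs, forall w, r.[w] = x}.
  move=> _ /mapP[k kks ->].
  have pzk : root p (z ^+ k) by rewrite pE root_prod_XsubC; apply: map_f.
  have ck : coprime k n := allP cks k kks.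
  have [_ [s [sz sK]]] := in_HK_minpoly_root p_min pzk ck.
  rewrite horner_mod // -sz -rmorph_horner_rat -xE.
  exact: x_fixed (ltn_ord k) ck s sz sK.
have urs : uniq rs.
  rewrite map_inj_in_uniq // => i j _ _ /eqP; rewrite (eq_prim_root_expr pz).
  by rewrite !modn_small ?ltn_ord // => /eqP /val_inj.
have rs_gt0 : (0 < size rs)%N.
  move: p_z; rewrite pE; case: (rs) => //.
  by rewrite big_nil /root hornerC oner_eq0.
have sr : (size r <= size rs)%N.
  have sp : size p = (size rs).+1 by rewrite pE size_prod_XsubC.
  by rewrite -ltnS -sp ltn_modpN0 // monic_neq0.
have -> : x = r`_0 by rewrite (poly_const_on_roots urs rs_gt0 sr rx) coefC.
by apply/polyOverP; rewrite modp_polyOver // map_ratr_polyOver.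
Qed.

End FixedField.

Section CayleyEigenvalues.
Variables (gT : finGroupType) (a : gT -> rat) (z : algC) (K : {pred algC}).
Hypotheses (pz : #|gT|.-primitive_root z) (aJ : class_fun a).
Local Notation ra := (fun h => ratr (a h) : algC).

Lemma cay_mxE : cay_mx a = group_mx ra.
Proof. by []. Qed.

Lemma class_fun_ratr : class_fun ra.
Proof. by move=> x y; rewrite aJ. Qed.

Lemma central_char_in_Qz i : in_Qz z (central_char ra i).
Proof.
apply: in_QzM.
  by apply: in_Qz_sum => h; apply: in_QzM; [apply: in_Qz_rat | apply: irr_in_Qz].
by rewrite irr1_degree -(ratr_nat algC) -fmorphV; apply: in_Qz_rat.
Qed.

Lemma all_eigs_in_central_char :
  all_eigs_in a K <-> forall i, central_char ra i \in K.
Proof.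
have eigE l := eigenvalue_group_mx l class_fun_ratr.
rewrite /all_eigs_in cay_mxE; split=> [eigK i | chiK l /eigE[i ->] //].
by apply: eigK; apply/eigE; exists i.
Qed.

Lemma all_eigs_inP : intermediate_field z K ->
  all_eigs_in a K <->
  forall k, (k < #|gT|)%N -> in_HK #|gT| z K k -> pow_fixed a k.
Proof.
move=> [K_divring K_Qz]; rewrite all_eigs_in_central_char; split.
  move=> chiK k _ [ck [s [sz sK]]] g.
  have aK' : (fun h => ratr (a (h ^+ expg_invn [set: gT] k)%g)) =1 ra.
    apply: central_char_inj => [x y | |i]; first by rewrite -conjXg aJ.
      exact: class_fun_ratr.
    by rewrite -(central_char_aut ck _ _ pz sz) sK.
  have := aK' (g ^+ k)%g.
  by rewrite /= expgK_coprime // => /fmorph_inj/esym.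
move=> a_fixed i; apply: (fixed_in_K K_divring pz K_Qz (central_char_in_Qz i)).
move=> k kn ck s sz sK; rewrite (central_char_aut ck _ _ pz sz).
apply: eq_central_char => h; congr ratr.
have a_k : pow_fixed a k by apply: a_fixed kn _; split=> //; exists s.
by rewrite -{2}(expgKV_coprime ck h) a_k.
Qed.

End CayleyEigenvalues.

Theorem mainTheorem17 (gT : finGroupType) (alpha beta : gT -> rat)
  (z : algC) (K : {pred algC}) :
  #|gT|.-primitive_root z ->
  sym_class_fun alpha -> sym_class_fun beta ->
  intermediate_field z K ->
  (forall k : nat, (k < #|gT|)%N ->
     ((in_HK #|gT| z K k /\ pow_fixed alpha k) <->
      (in_HK #|gT| z K k /\ pow_fixed beta k))) ->
  (all_eigs_in alpha K <-> all_eigs_in beta K).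
Proof.
move=> pz [aJ _] [bJ _] K_int H_eq.
rewrite (all_eigs_inP pz aJ K_int) (all_eigs_inP pz bJ K_int).
split=> fixed k kn HKk; have [ab ba] := H_eq k kn.
  by case: (ab (conj HKk (fixed k kn HKk))).
by case: (ba (conj HKk (fixed k kn HKk))).
Qed.
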